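(* Let $G$ be a locally compact (Hausdorff) topological group. Then $G$ is approximable by finite $l$-quasigroups, and likewise $G$ is approximable by finite $r$-quasigroups.
   Context: A (finite) $l$-quasigroup is a set $H$ with a binary operation $\odot$ such that for all $a,b\in H$ the equation $a\odot x=b$ has a unique solution $x\in H$; an $r$-quasigroup is defined in the same way with the equation $x\odot a=b$. Approximability: let $C\subseteq G$ be compact, $U$ a neighborhood of the unit of $G$, and $(H,\odot)$ a finite algebra (a set with one binary operation). A set $M\subseteq G$ is a $U$-grid of $C$ if $C\subseteq MU=\{mu: m\in M,u\in U\}$. A map $j:H\to G$ is a $(C,U)$-homomorphism if for all $x,y\in H$ with $j(x),j(y),j(x)j(y)\in C$ one has $j(x\odot y)\in j(x)j(y)U$. The pair $(H,j)$ is a $(C,U)$-approximation of $G$ if $j(H)$ is a $U$-grid of $C$ and $j$ is a $(C,U)$-homomorphism. For a class $\mathcal K$ of finite algebras, $G$ is approximable by systems of $\mathcal K$ if for every compact $C\subseteq G$ and every neighborhood $U$ of the unit there is a $(C,U)$-approximation $(H,j)$ of $G$ with $H\in\mathcal K$ and $j$ injective. *)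

From HB Require Import structures.
From mathcomp Require Import all_boot all_algebra.
From mathcomp Require Import all_classical all_reals topology.
Set Implicit Arguments. Unset Strict Implicit. Unset Printing Implicit Defensive.
Local Open Scope classical_set_scope.

Definition is_topological_group (T : topologicalType)
    (mul : T -> T -> T) (inv : T -> T) (one : T) : Prop :=
  [/\ (forall x y z, mul x (mul y z) = mul (mul x y) z),
      (forall x, mul one x = x /\ mul x one = x),
      (forall x, mul (inv x) x = one /\ mul x (inv x) = one),
      continuous (fun p : T * T => mul p.1 p.2) &
      continuous inv].

Definition l_quasigroup (H : finType) (op : H -> H -> H) : Prop :=
  forall a b : H, exists! x : H, op a x = b.

Definition r_quasigroup (H : finType) (op : H -> H -> H) : Prop :=
  forall a b : H, exists! x : H, op x a = b.

Section Approx.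
Variables (T : topologicalType) (mul : T -> T -> T) (one : T).

Definition setmul (M U : set T) : set T :=
  [set z | exists m u, [/\ M m, U u & z = mul m u]].

Definition is_grid (U C M : set T) : Prop := C `<=` setmul M U.

Definition CU_hom (C U : set T) (H : finType) (op : H -> H -> H)
    (j : H -> T) : Prop :=
  forall x y : H, C (j x) -> C (j y) -> C (mul (j x) (j y)) ->
    setmul [set mul (j x) (j y)] U (j (op x y)).

Definition CU_approximation (C U : set T) (H : finType) (op : H -> H -> H)
    (j : H -> T) : Prop :=
  is_grid U C (range j) /\ CU_hom C U op j.

Definition approximable_by (K : forall H : finType, (H -> H -> H) -> Prop)
    : Prop :=
  forall C : set T, compact C -> forall U : set T, nbhs one U ->
    exists (H : finType) (op : H -> H -> H) (j : H -> T),
      [/\ K H op, injective j & CU_approximation C U op j].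
End Approx.

(* Fix a compact [C] and a symmetric neighbourhood [V] of the unit inside [U].
   By compactness, families in [C] that are [V]-separated ([k_s^-1 k_t] never in
   [V]) have bounded size; take one, [k : H -> C], of maximal size.  Maximality
   makes [k(H)] a [V]-grid of [C], and for each [a] it gives Hall's condition for
   the relation "[a k_y] is [V]-close to [k_z]": a deficient set would produce a
   larger separated family.  Hall's marriage theorem then yields permutations
   [f_a] of [H], and [x * y := f_(k x) y] is an l-quasigroup approximating [G].
   For r-quasigroups, approximate the opposite group with a neighbourhood [U']
   so small that [p^-1 U' p] lies in [U] for every [p] in [C]. *)

From mathcomp Require Import all_boot.
Set Implicit Arguments. Unset Strict Implicit. Unset Printing Implicit Defensive.

Section HallMarriage.
Variable T : finType.
Implicit Types (R : rel T) (A B S : {set T}) (f : T -> T).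

Definition neighbours R S : {set T} := [set z | [exists y in S, R y z]].

Definition hall_condition R A := forall S, S \subset A -> #|S| <= #|neighbours R S|.

Definition matching R A f := {in A &, injective f} /\ {in A, forall x, R x (f x)}.

Lemma neighboursP R S z : reflect (exists2 y, y \in S & R y z) (z \in neighbours R S).
Proof. by rewrite inE; apply: (iffP exists_inP). Qed.

Lemma neighboursU R S1 S2 :
  neighbours R (S1 :|: S2) = neighbours R S1 :|: neighbours R S2.
Proof.
apply/setP => z; rewrite in_setU; apply/neighboursP/orP => [[y]|].
  by rewrite in_setU => /orP[] yS Ryz; [left|right]; apply/neighboursP; exists y.
by case=> /neighboursP[y yS Ryz]; exists y; rewrite // in_setU yS ?orbT.
Qed.

Lemma neighbours_avoid R B S :
  neighbours [rel x z | R x z && (z \notin B)] S = neighbours R S :\: B.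
Proof.
apply/setP => z; rewrite in_setD; apply/neighboursP/andP.
  by case=> y yS /andP[Ryz zB]; split=> //; apply/neighboursP; exists y.
by case=> zB /neighboursP[y yS Ryz]; exists y; rewrite //= Ryz.
Qed.

Lemma matching_set0 R f : matching R set0 f.
Proof. by split=> x; rewrite inE. Qed.

Lemma matching_glue R A S B f1 f2 :
  {in S, forall x, f1 x \in B} -> matching R S f1 ->
  matching [rel x z | R x z && (z \notin B)] (A :\: S) f2 ->
  matching R A (fun x => if x \in S then f1 x else f2 x).
Proof.
move=> f1B [inj1 R1] [inj2 R2].
have R2A x : x \in A -> x \notin S -> R x (f2 x) && (f2 x \notin B).
  by move=> xA xS; apply: R2; rewrite in_setD xS.
split=> [x y xA yA|x xA]; last first.
  by case: ifPn => xS; [exact: R1 | have /andP[] := R2A x xA xS].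
case: ifPn => xS; case: ifPn => yS.
- exact: inj1.
- by move=> fxy; have /andP[_] := R2A y yA yS; rewrite -fxy f1B.
- by move=> fxy; have /andP[_] := R2A x xA xS; rewrite fxy f1B.
- by apply: inj2; rewrite in_setD ?xS ?yS.
Qed.

Section InductionStep.
Variable n : nat.
Hypothesis IH : forall R A, #|A| <= n -> hall_condition R A -> exists f, matching R A f.

(* Halmos-Vaughan: match a critical set [S] first, then the rest avoiding [neighbours R S]. *)
Lemma hall_step_critical R A S : #|A| <= n.+1 -> hall_condition R A ->
  S \subset A -> S != set0 -> S != A -> #|neighbours R S| <= #|S| ->
  exists f, matching R A f.
Proof.
move=> cardA hallA sSA S0 SA critS.
have [f1 match1] : exists f, matching R S f.
  apply: IH => [|S' sS']; last exact/hallA/(subset_trans sS').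
  by rewrite -ltnS (leq_trans _ cardA) // proper_card // properEneq SA.
have [f2 match2] : exists f,
    matching [rel x z | R x z && (z \notin neighbours R S)] (A :\: S) f.
  apply: IH => [|S' sS'].
    rewrite -ltnS (leq_trans _ cardA) // cardsDS // ltn_subrL.
    by rewrite card_gt0 S0 card_gt0 (subset_neq0 sSA).
  rewrite neighbours_avoid -(leq_add2r #|S|).
  have disS' : [disjoint S' & S] by move: sS'; rewrite subsetD => /andP[].
  have cardS'S : #|S' :|: S| = #|S'| + #|S| by apply/eqP; rewrite (leq_card_setU S' S).2.
  have sS'SA : S' :|: S \subset A by rewrite subUset sSA (subset_trans sS') ?subsetDl.
  rewrite -cardS'S (leq_trans (hallA _ sS'SA)) // neighboursU.
  rewrite -(cardsID (neighbours R S)) setDUl setDv setU0 addnC leq_add2l.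
  by rewrite (leq_trans _ critS) // subset_leq_card // subsetIr.
exists (fun x => if x \in S then f1 x else f2 x); apply: matching_glue match2 => //.
by move=> x xS; apply/neighboursP; exists x; [|exact: match1.2].
Qed.

(* No critical set: match some [x0] to a neighbour [y0] and remove both. *)
Lemma hall_step_surplus R A x0 : x0 \in A -> #|A| <= n.+1 -> hall_condition R A ->
  (forall S, S \subset A -> S != set0 -> S != A -> #|S| < #|neighbours R S|) ->
  exists f, matching R A f.
Proof.
move=> x0A cardA hallA surplus.
have [y0 Rx0y0] : exists y0, R x0 y0.
  have : 0 < #|neighbours R [set x0]|.
    by rewrite (leq_trans _ (hallA _ _)) ?cards1 ?sub1set.
  by rewrite card_gt0 => /set0Pn[y /neighboursP[x]]; rewrite inE => /eqP->; exists y.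
have [f2 match2] : exists f,
    matching [rel x z | R x z && (z \notin [set y0])] (A :\ x0) f.
  apply: IH => [|S sS].
    by rewrite -ltnS (leq_trans _ cardA) // (cardsD1 x0 A) x0A.
  have [->|S0] := eqVneq S set0; first by rewrite cards0.
  have SA : S != A by apply: contraTneq sS => ->; apply/subsetPn; exists x0; rewrite ?setD11.
  have := surplus S (subset_trans sS (subsetDl _ _)) S0 SA.
  rewrite neighbours_avoid (cardsD1 y0 (neighbours R S)).
  by case: (y0 \in _); rewrite ?add1n ?add0n // => /ltnW.
exists (fun x => if x \in [set x0] then y0 else f2 x).
apply: (matching_glue (f1 := fun=> y0)) match2 => [x _|]; first by rewrite inE.
by split=> [x y|x]; rewrite !inE => /eqP-> //; move/eqP->.
Qed.

End InductionStep.

Theorem hall_marriage R A : hall_condition R A -> exists f, matching R A f.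
Proof.
move: {2}#|A| (leqnn #|A|) => n; elim: n R A => [|n IH] R A cardA hallA.
  by exists id; move: cardA; rewrite leqn0 cards_eq0 => /eqP->; exact: matching_set0.
have [A0|[x0 x0A]] := set_0Vmem A; first by exists id; rewrite A0; exact: matching_set0.
have [/existsP[S /and4P[]]|] :=
  boolP [exists S : {set T}, [&& S \subset A, S != set0, S != A & #|neighbours R S| <= #|S|]].
  exact: (hall_step_critical IH cardA hallA).
rewrite negb_exists => /forallP critical_free.
apply: (hall_step_surplus IH x0A cardA hallA) => S sSA S0 SA.
by have := critical_free S; rewrite sSA S0 SA /= -ltnNge.
Qed.

Corollary hall_perfect_matching R :
  (forall S, #|S| <= #|neighbours R S|) -> exists f, injective f /\ forall x, R x (f x).
Proof.
move=> hallT; have [|f [finj fR]] := @hall_marriage R setT; first by move=> S _.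
by exists f; split=> [x y|x]; [apply: finj | apply: fR]; rewrite inE.
Qed.

End HallMarriage.

From HB Require Import structures.
From mathcomp Require Import all_algebra finmap.
From mathcomp Require Import all_classical all_reals topology.
Local Open Scope classical_set_scope.

Lemma compact_fset_cover (T : topologicalType) (C : set T) (O : T -> set T) :
  compact C -> (forall x, C x -> nbhs x (O x)) ->
  exists D : {fset T}, forall y, C y -> exists2 x, x \in D & O x y.
Proof.
move=> /compact_near_coveringP cC Ox.
pose F := filter_from [set: {fset T}] (fun D0 => [set D | (D0 `<=` D)%fset]).
have FF : Filter F.
  apply: filter_from_filter; first by exists fset0%fset.
  move=> D1 D2 _ _; exists (D1 `|` D2)%fset => // D /= D12.
  by split; apply: fsubset_trans D12; [exact: fsubsetUl | exact: fsubsetUr].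
have [|D0 _ D0C] := cC {fset T} F (fun D y => exists2 x, x \in D & O x y) FF.
  move=> x Cx; exists (O x, [set D | x \in D]) => [|[y D] [/= Oy xD]]; last by exists x.
  by split; [exact: Ox | exists [fset x]%fset => // D /fsubsetP; apply; rewrite inE].
by exists D0; apply: D0C; exact: fsubset_refl.
Qed.

Section TopologicalGroup.
Variables (G : topologicalType) (mul : G -> G -> G) (inv : G -> G) (one : G).
Hypothesis HG : is_topological_group mul inv one.

Lemma mulgA x y z : mul x (mul y z) = mul (mul x y) z.
Proof. by case: HG. Qed.

Lemma mul1g x : mul one x = x.
Proof. by case: HG => _ /(_ x)[]. Qed.

Lemma mulg1 x : mul x one = x.
Proof. by case: HG => _ /(_ x)[]. Qed.

Lemma mulVg x : mul (inv x) x = one.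
Proof. by case: HG => _ _ /(_ x)[]. Qed.

Lemma mulgV x : mul x (inv x) = one.
Proof. by case: HG => _ _ /(_ x)[]. Qed.

Lemma mulKg a p : mul (inv a) (mul a p) = p.
Proof. by rewrite mulgA mulVg mul1g. Qed.

Lemma mulKVg a p : mul a (mul (inv a) p) = p.
Proof. by rewrite mulgA mulgV mul1g. Qed.

Lemma invg_unique x y : mul x y = one -> x = inv y.
Proof. by move=> xy1; rewrite -[x]mulg1 -(mulgV y) mulgA xy1 mul1g. Qed.

Lemma invgK x : inv (inv x) = x.
Proof. by apply/esym/invg_unique; rewrite mulgV. Qed.

Lemma invg1 : inv one = one.
Proof. by apply/esym/invg_unique; rewrite mul1g. Qed.

Lemma invMg a b : inv (mul a b) = mul (inv b) (inv a).
Proof. by apply/esym/invg_unique; rewrite -mulgA mulKg mulVg. Qed.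

Lemma divg_mull a p q : mul (inv (mul a p)) (mul a q) = mul (inv p) q.
Proof. by rewrite invMg -mulgA mulKg. Qed.

Lemma mul_cvg (T : Type) (F : set_system T) {FF : Filter F} (f g : T -> G) a b :
  f @ F --> a -> g @ F --> b -> (fun t => mul (f t) (g t)) @ F --> mul a b.
Proof.
move=> fa gb; apply: cvg_comp2 fa gb _ => P.
by case: HG => _ _ _ /(_ (a, b) P).
Qed.

Lemma inv_cvg (T : Type) (F : set_system T) {FF : Filter F} (f : T -> G) a :
  f @ F --> a -> (fun t => inv (f t)) @ F --> inv a.
Proof. by case: HG => _ _ _ _ /(_ a) inv_a fa; apply: cvg_comp fa inv_a. Qed.

Lemma div_nbhs_one V : nbhs one V ->
  exists2 W, nbhs one W & forall a b, W a -> W b -> V (mul (inv a) b).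
Proof.
move=> nV.
have div_cvg : (fun q : G * G => mul (inv q.1) q.2) @ nbhs (one, one) --> one.
  rewrite -[X in _ --> X](mulVg one).
  by apply: mul_cvg; [apply: inv_cvg; exact: cvg_fst | exact: cvg_snd].
have [[A B] /= [nA nB] ABV] := div_cvg V nV.
exists (A `&` B) => [|a b [Aa _] [_ Bb]]; first exact: filterI.
exact: (ABV (a, b)).
Qed.

Definition separated (V : set G) (T : finType) (k : T -> G) :=
  forall s t, s <> t -> ~ V (mul (inv (k s)) (k t)).

Lemma separated_inj V (T : finType) (k : T -> G) :
  V one -> separated V k -> injective k.
Proof.
move=> V1 ksep s t kst; apply: contrapT => st.
by apply: (ksep _ _ st); rewrite kst mulVg.
Qed.

(* Each translate [x W] of a small [W] meets a separated family at most once. *)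
Lemma separated_card_bounded V C : nbhs one V -> compact C ->
  exists N, forall (T : finType) (k : T -> G),
    (forall t, C (k t)) -> separated V k -> #|T| <= N.
Proof.
move=> nV cC; have [W nW WV] := div_nbhs_one nV.
have [|D CD] := @compact_fset_cover _ C (fun x => mul (inv x) @^-1` W) cC.
  move=> x _; have : (fun y => mul (inv x) y) @ nbhs x --> one.
    by rewrite -(mulVg x); apply: mul_cvg; [exact: cvg_cst | exact: cvg_id].
  by apply.
exists #|` D| => T k kC ksep; rewrite cardfE.
have /fin_all_exists[f kf] t : exists x : D, W (mul (inv (val x)) (k t)).
  by have [x Dx Wx] := CD _ (kC t); exists [` Dx]%fset.
apply: (@leq_card _ _ f) => s t fst; apply: contrapT => st; apply: (ksep _ _ st).
by rewrite -(divg_mull (inv (val (f s)))); apply: WV; [exact: kf | rewrite fst; exact: kf].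
Qed.

Lemma exists_maximal_separated V C : nbhs one V -> compact C ->
  exists (T : finType) (k : T -> G), [/\ forall t, C (k t), separated V k &
    forall (T' : finType) (k' : T' -> G),
      (forall t, C (k' t)) -> separated V k' -> #|T'| <= #|T|].
Proof.
move=> nV cC; have [N bounded] := separated_card_bounded nV cC.
pose realized n := `[< exists (T : finType) (k : T -> G),
  [/\ #|T| = n, forall t, C (k t) & separated V k] >].
have [|n|n /asboolP[T [k [<- kC ksep]]] maximal] := @ex_maxnP realized N.
- by exists 0%N; apply/asboolP; exists void, (of_void G); split; [exact: card_void | case..].
- by move=> /asboolP[T [k [<- kC ksep]]]; exact: bounded kC ksep.
exists T, k; split=> // T' k' k'C k'sep.
by apply: maximal; apply/asboolP; exists T', k'.
Qed.

Section MaximalSeparated.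
Variables (V C : set G) (T : finType) (k : T -> G).
Hypotheses (Vsym : forall x, V x -> V (inv x)) (kC : forall t, C (k t)).
Hypothesis ksep : separated V k.
Hypothesis kmax : forall (T' : finType) (k' : T' -> G),
  (forall t, C (k' t)) -> separated V k' -> #|T'| <= #|T|.

Lemma Vdiv_sym p q : V (mul (inv p) q) -> V (mul (inv q) p).
Proof. by move/Vsym; rewrite invMg invgK. Qed.

Lemma maximal_separated_cover c : C c -> exists t, V (mul (inv (k t)) c).
Proof.
move=> Cc; apply: contrapT => /forallNP far_c.
pose k' (w : option T) := if w is Some t then k t else c.
have k'C w : C (k' w) by case: w => [t|] //; apply: kC.
have k'sep : separated V k'.
  case=> [s|] [t|] /= st.
  - by apply: ksep => kst; apply: st; rewrite kst.
  - exact: far_c.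
  - by move/Vdiv_sym; apply: far_c.
  - by case: st.
by have := @kmax _ _ k'C k'sep; rewrite card_option ltnn.
Qed.

Lemma maximal_separated_translate a : exists f : T -> T, injective f /\
  forall y, C (k y) -> C (mul a (k y)) -> V (mul (inv (mul a (k y))) (k (f y))).
Proof.
pose R := [rel y z | `[< C (k y) -> C (mul a (k y)) ->
                         V (mul (inv (mul a (k y))) (k z)) >]].
have [|f [finj fR]] := @hall_perfect_matching _ R.
  move=> S; rewrite leqNgt; apply/negP => deficient.
  have inS y : y \in S -> C (k y) /\ C (mul a (k y)).
    move=> yS; apply: contrapT => outC; move: deficient; apply/negP; rewrite -leqNgt.
    have -> : neighbours R S = [set: T]%SET.
      apply/setP => z; rewrite [in RHS]inE; apply/neighboursP; exists y => //.
      by apply/asboolP => Cy Cay; case: outC.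
    by rewrite cardsT max_card.
  have far y z : y \in S -> z \notin neighbours R S ->
      ~ V (mul (inv (mul a (k y))) (k z)).
    move=> yS /neighboursP zN Vyz; apply: zN; exists y => //.
    by apply/asboolP.
  pose k' (w : {y | y \in S} + {z | z \notin neighbours R S}) :=
    match w with inl y => mul a (k (val y)) | inr z => k (val z) end.
  have k'C w : C (k' w) by case: w => [y|z] /=; [exact: (inS _ (valP y)).2 | exact: kC].
  have k'sep : separated V k'.
    case=> [y1|z1] [y2|z2] /= w12.
    - by rewrite divg_mull; apply: ksep => y12; apply: w12; congr inl; apply: val_inj.
    - exact: far (valP y1) (valP z2).
    - by move/Vdiv_sym; apply: far (valP y2) (valP z1).
    - by apply: ksep => z12; apply: w12; congr inr; apply: val_inj.
  have := @kmax _ _ k'C k'sep; rewrite card_sum !card_sig.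
  have -> : #|[pred y | y \in S]| = #|S| by apply: eq_card.
  have -> : #|[pred z | z \notin neighbours R S]| = #|~: neighbours R S|.
    by apply: eq_card => z; rewrite !inE.
  by rewrite -[X in _ <= X](cardsC (neighbours R S)) leq_add2r leqNgt deficient.
exists f; split=> // y; exact/asboolP/fR.
Qed.

End MaximalSeparated.

Lemma l_quasigroup_approximation_within C U : compact C -> nbhs one U ->
  exists (H : finType) (op : H -> H -> H) (j : H -> G),
    [/\ l_quasigroup op, injective j, forall h, C (j h) &
        CU_approximation mul C U op j].
Proof.
move=> cC nU; pose V := U `&` inv @^-1` U.
have nV : nbhs one V.
  have inv_cvg1 : (fun x => inv x) @ nbhs one --> one.
    by rewrite -[X in _ --> X]invg1; apply: inv_cvg; exact: cvg_id.
  exact: filterI nU (inv_cvg1 U nU).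
have Vsym x : V x -> V (inv x) by case=> Ux Uix; split; rewrite /= ?invgK.
have [T [k [kC ksep kmax]]] := exists_maximal_separated nV cC.
have [f fP] := choice (maximal_separated_translate Vsym kC ksep kmax).
exists T, (fun x => f (k x)), k; split.
- move=> x z; have [g fg gf] := injF_bij (fP (k x)).1.
  by exists (g z); split=> [|y <-]; rewrite ?gf ?fg.
- by apply: separated_inj ksep; split; rewrite /= ?invg1; apply: nbhs_singleton.
- exact: kC.
split.
- move=> c Cc; have [t [Ut _]] := maximal_separated_cover Vsym kC ksep kmax Cc.
  by exists (k t), (mul (inv (k t)) c); split; [exists t | | rewrite mulKVg].
- move=> x y _ Cy Cxy; have [Uxy _] := (fP (k x)).2 y Cy Cxy.
  exists (mul (k x) (k y)), (mul (inv (mul (k x) (k y))) (k (f (k x) y))).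
  by split; rewrite ?mulKVg.
Qed.

Lemma conjugation_uniform C U : compact C -> nbhs one U ->
  exists2 U', nbhs one U' & forall p u, C p -> U' u -> U (mul (inv p) (mul u p)).
Proof.
move=> /compact_near_coveringP cC nU.
have near_conj x : C x -> \forall p \near x & u \near one, U (mul (inv p) (mul u p)).
  move=> _; have conj_cvg : (fun q : G * G => mul (inv q.1) (mul q.2 q.1))
      @ nbhs (x, one) --> mul (inv x) (mul one x).
    apply: mul_cvg; first by apply: inv_cvg; exact: cvg_fst.
    by apply: mul_cvg; [exact: cvg_snd | exact: cvg_fst].
  rewrite mul1g mulVg in conj_cvg.
  have near_conjU : nbhs (x, one) [set q | U (mul (inv q.1) (mul q.2 q.1))].
    exact: conj_cvg U nU.
  by apply: filterS near_conjU; case.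
exists [set u | C `<=` (fun p => U (mul (inv p) (mul u p)))] => [|p u Cp]; last exact.
exact: cC G (nbhs one) (fun u p => U (mul (inv p) (mul u p))) _ near_conj.
Qed.

Lemma opposite_topological_group :
  is_topological_group (fun x y => mul y x) inv one.
Proof.
split=> [x y z|x|x||]; rewrite ?mulgA ?mul1g ?mulg1 ?mulVg ?mulgV //.
- by move=> [a b]; apply: mul_cvg; [exact: cvg_snd | exact: cvg_fst].
- by case: HG.
Qed.

End TopologicalGroup.

Section Approximation.
Variables (G : topologicalType) (mul : G -> G -> G) (inv : G -> G) (one : G).
Hypothesis HG : is_topological_group mul inv one.

Lemma l_quasigroup_approximable : approximable_by mul one l_quasigroup.
Proof.
move=> C cC U nU.
have [H [op [j [lq jinj _ approx]]]] := l_quasigroup_approximation_within HG cC nU.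
by exists H, op, j.
Qed.

(* The opposite group yields points of the form [u p] with [u] in [U'];
   rewrite them as [p (p^-1 u p)]. *)
Lemma r_quasigroup_approximable : approximable_by mul one r_quasigroup.
Proof.
move=> C cC U nU; have [U' nU' conjU'] := conjugation_uniform HG cC nU.
have [H [op [j [lq jinj jC [grid hom]]]]] :=
  l_quasigroup_approximation_within (opposite_topological_group HG) cC nU'.
exists H, (fun x y => op y x), j; split=> //; split.
- move=> c /grid[_ [u [[h _ <-] U'u ->]]].
  exists (j h), (mul (inv (j h)) (mul u (j h))).
  by split; [exists h | apply: conjU' | rewrite (mulKVg HG)].
- move=> x y Cx Cy Cxy; have [_ [u [-> U'u ->]]] := hom y x Cy Cx Cxy.
  exists (mul (j x) (j y)), (mul (inv (mul (j x) (j y))) (mul u (mul (j x) (j y)))).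
  by split; [| apply: conjU' | rewrite (mulKVg HG)].
Qed.

End Approximation.

Theorem theorem1 (G : topologicalType) (mul : G -> G -> G) (inv : G -> G)
    (one : G) :
  is_topological_group mul inv one ->
  hausdorff_space G ->
  locally_compact [set: G] ->
  approximable_by mul one l_quasigroup /\ approximable_by mul one r_quasigroup.
Proof.
move=> HG _ _.
by split; [exact: (l_quasigroup_approximable HG) | exact: (r_quasigroup_approximable HG)].
Qed.
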